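(* Let $a_{1}<a_{2}<a_{3}<\cdots$ be a strictly increasing infinite sequence of positive integers, let $A=\{a_{1},a_{2},a_{3},\ldots\}$, and let $n>0$ be an integer such that: (1) whenever $m>n$, there exist indices $i<r\leq s<j$ with $a_{m}=a_{i}+a_{j}=a_{r}+a_{s}$; and (2) whenever $a=a_{i}+a_{j}=a_{r}+a_{s}>a_{n}$ for some indices $i<r<s<j$, then $a=a_{m}$ for some $m>n$. Then $A$ is eventually linear, i.e., there exist integers $N$ and $k\geq 1$ such that for all integers $x>N$, $x\in A$ if and only if $k\mid x$. *)

From mathcomp Require Import all_boot.
Set Implicit Arguments.
Unset Strict Implicit.
Unset Printing Implicit Defensive.

(* The sequence a_1 < a_2 < ... is a : nat -> nat with indices starting at 1;
   the value a 0 is irrelevant and never used. *)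
Definition inA (a : nat -> nat) (x : nat) : Prop := exists i, 1 <= i /\ a i = x.

From Stdlib Require Import Classical Wf_nat.
From mathcomp Require Import all_boot zify.
Set Implicit Arguments.
Unset Strict Implicit.
Unset Printing Implicit Defensive.

(* Write A for the set of terms; condition (2) makes A closed under w + z
   whenever w < x < y < z lie in A with w + z = x + y > a_n.  Call p < d < t in A
   a skew triple if d - p and t - p lie in A, t - p <> d and t > a_n.

   A skew triple exists.  Otherwise, if a_m1 < a_m2 (n < m1) both have a_p as a
   summand, then (a_p, a_m1, a_m2) is not skew, i.e. a_m2 = a_m1 + a_p; so a_p is
   a summand of at most two a_m with m > n, whereas by (1) every such a_m has the
   three summands a_i, a_r, a_j.
   Counting pairs (m, p) with n < m <= 3n + 3 gives 3(2n + 3) <= 2(3n + 4).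

   A skew triple (p, d, t) yields the skew triple (p, d, d + t), hence the
   progression t + kd inside A.  From it, every residue class mod d that meets A
   twice is eventually contained in A, so beyond some N membership in A depends
   only on the residue mod d; the eventually full classes are closed under
   addition and contain 0, so they are the multiples of some k. *)

Definition four_term_closed (P : nat -> Prop) (c : nat) : Prop :=
  forall w x y z, P w -> P x -> P y -> P z -> w < x -> x < y -> y < z ->
    w + z = x + y -> c < w + z -> P (w + z).

Definition skew_triple (P : nat -> Prop) (c p d t : nat) : Prop :=
  [/\ P p, P d, P t, P (d - p) & P (t - p)] /\ [/\ p < d, d < t, t - p != d & c < t].

Lemma double_counting (I J : finType) (R : I -> J -> bool) :
  \sum_i #|[set j | R i j]| = \sum_j #|[set i | R i j]|.
Proof.
under eq_bigr do rewrite -sum1dep_card.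
rewrite (exchange_big_dep xpredT) //=.
by apply: eq_bigr => j _; rewrite sum1dep_card.
Qed.

Lemma double_counting_leq (I J : finType) (R : I -> J -> bool) (c d : nat) :
  (forall i, c <= #|[set j | R i j]|) -> (forall j, #|[set i | R i j]| <= d) ->
  #|I| * c <= #|J| * d.
Proof.
move=> lbR ubR; rewrite -!sum_nat_const.
apply: (@leq_trans (\sum_i #|[set j | R i j]|)); first exact: leq_sum.
by rewrite double_counting leq_sum.
Qed.

Lemma ex_minn_classic (Q : nat -> Prop) :
  (exists k, Q k) -> exists k, Q k /\ forall j, Q j -> k <= j.
Proof.
move=> exQ; have [k [[Qk kmin] _]] :=
  dec_inh_nat_subset_has_unique_least_element Q (fun j => classic (Q j)) exQ.
by exists k; split=> // j /kmin /leP.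
Qed.

Lemma submonoid_mod_dvd (Q : nat -> Prop) (D : nat) : 0 < D ->
    (forall s s', s = s' %[mod D] -> Q s -> Q s') -> Q 0 ->
    (forall s t, Q s -> Q t -> Q (s + t)) ->
  exists2 k, 0 < k & forall s, Q s <-> k %| s.
Proof.
move=> D_gt0 Qmod Q0 QD.
have QM m s : Q s -> Q (m * s).
  by move=> Qs; elim: m => [|m IH]; rewrite ?mul0n // mulSn; apply: QD.
have [k [[k_gt0 Qk] kmin]] : exists k, (0 < k /\ Q k) /\ forall j, 0 < j /\ Q j -> k <= j.
  by apply: ex_minn_classic; exists D; split=> //; apply: Qmod Q0; rewrite mod0n modnn.
exists k => // s; split=> [Qs|/dvdnP [q ->]]; last exact: QM.
have Qr : Q (s %% k).
  apply: Qmod (QD _ _ Qs (QM (D.-1 * (s %/ k)) _ Qk)).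
  rewrite {1}(divn_eq s k) addnAC -mulnA -mulSn prednK //.
  by rewrite mulnC modnMDl.
rewrite /dvdn eqn0Ngt; apply/negP => r_gt0.
by have := kmin _ (conj r_gt0 Qr); rewrite leqNgt ltn_pmod.
Qed.

Section EventuallyPeriodic.

Variables (P : nat -> Prop) (c : nat).
Hypothesis P_closed : four_term_closed P c.
Variables (y0 D : nat).
Hypothesis D_gt0 : 0 < D.
Hypothesis P_progression : forall k, P (y0 + k * D).

Definition full_class (s : nat) : Prop :=
  exists C, forall v, C <= v -> v = s %[mod D] -> P v.

Lemma full_class_eqmod s s' : s = s' %[mod D] -> full_class s -> full_class s'.
Proof. by move=> ss' [C PC]; exists C => v Cv vs'; apply: PC; rewrite // vs'. Qed.

Lemma full_class_progression : full_class y0.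
Proof.
exists y0 => v y0v /eqP; rewrite eqn_mod_dvd // => /divnK vE.
by have := P_progression ((v - y0) %/ D); rewrite vE subnKC.
Qed.

Lemma full_classD s1 s2 : full_class s1 -> full_class s2 -> full_class (s1 + s2).
Proof.
move=> [C1 PC1] [C2 PC2]; pose y1 := s1 + C1 * D.
have y1_mod : y1 = s1 %[mod D] by rewrite /y1 addnC modnMDl.
have C1y1 : C1 <= y1 by rewrite /y1 (leq_trans (leq_pmulr _ D_gt0)) ?leq_addl.
clearbody y1; exists (2 * y1 + C2 + 3 * D + c + 1) => v Cv v_mod.
have [y2 vE] : exists y2, v = y1 + y2 by exists (v - y1); clear -Cv; lia.
subst v.
have [Dy2 C2y2 y1y2 cy] : [/\ D <= y2, C2 <= y2 - D, y1 + D < y2 - D & c < y1 + y2].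
  by clear -Cv D_gt0; split; lia.
have y2_mod : y2 = s2 %[mod D].
  by apply/eqP; rewrite -(eqn_modDl y1) v_mod -modnDml -y1_mod modnDml.
have Py2D : P (y2 - D) by apply: PC2; rewrite // -y2_mod -{2}(subnK Dy2) modnDr.
apply: (P_closed (PC1 _ _ y1_mod) (PC1 (y1 + D) _ _) Py2D (PC2 _ _ y2_mod)).
all: by rewrite ?modnDr //; clear -C1y1 C2y2 y1y2 cy D_gt0; lia.
Qed.

Lemma full_class0 : full_class 0.
Proof.
have PM j : full_class (j.+1 * y0).
  elim: j => [|j IH]; first by rewrite mul1n; apply: full_class_progression.
  by rewrite mulSn; apply: full_classD; first exact: full_class_progression.
by apply: full_class_eqmod (PM D.-1); rewrite prednK // mod0n modnMr.
Qed.

Lemma full_class_of_pair z z' :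
  z < z' -> P z -> P z' -> z = z' %[mod D] -> full_class z.
Proof.
move=> zz' Pz Pz' z_mod; have [C0 PC0] := full_class0.
exists (2 * z' + C0 + c + 1) => v Cv v_mod.
have sub_mod0 u : u <= v -> v = u %[mod D] -> v - u = 0 %[mod D].
  by move=> uv /eqP; rewrite eqn_mod_dvd // mod0n => /eqP.
have Pvz : P (v - z) by apply: PC0; [lia | apply: sub_mod0; lia].
have Pvz' : P (v - z') by apply: PC0; [lia | apply: sub_mod0; lia].
have -> : v = z + (v - z) by lia.
by apply: (P_closed Pz Pz' Pvz' Pvz); lia.
Qed.

Lemma class_dichotomy s : exists N, forall v w, N <= v -> N <= w ->
  v = s %[mod D] -> w = s %[mod D] -> P v -> P w.
Proof.
have [[z [z' [zz' Pz Pz' zs z's]]] | no_pair] :=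
  classic (exists z z', [/\ z < z', P z, P z', z = s %[mod D] & z' = s %[mod D]]).
  have [C PC] := full_class_of_pair zz' Pz Pz' (etrans zs (esym z's)).
  by exists C => v w _ Cw _ ws _; apply: PC; rewrite // ws zs.
have [[z [Pz zs]] | no_elt] := classic (exists z, P z /\ z = s %[mod D]).
  by exists z.+1 => v w zv _ vs _ Pv; case: no_pair; exists z, v.
by exists 0 => v w _ _ vs _ Pv; case: no_elt; exists v.
Qed.

Lemma membership_eventually_mod : exists N, forall v w, N <= v -> N <= w ->
  v = w %[mod D] -> P v -> P w.
Proof.
suff /(_ D) [N PN] : forall K, exists N, forall s, s < K -> forall v w,
    N <= v -> N <= w -> v = s %[mod D] -> w = s %[mod D] -> P v -> P w.
  exists N => v w Nv Nw vw; apply: (PN (v %% D)); rewrite ?ltn_pmod ?modn_mod //.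
elim=> [|K [N PN]]; first by exists 0.
have [N' PN'] := class_dichotomy K.
exists (maxn N N') => s; rewrite ltnS leq_eqVlt => /orP [/eqP -> | sK] v w.
  by rewrite !geq_max => /andP [_ N'v] /andP [_ N'w]; apply: PN'.
by rewrite !geq_max => /andP [Nv _] /andP [Nw _]; apply: PN.
Qed.

Theorem eventually_periodic : exists N k, 1 <= k /\ forall x, N < x -> (P x <-> k %| x).
Proof.
have [N PN] := membership_eventually_mod.
have [k k_gt0 fullE] :=
  submonoid_mod_dvd D_gt0 full_class_eqmod full_class0 full_classD.
exists N, k; split=> // x Nx; rewrite -fullE; split=> [Px | [C PC]].
  by exists N => v Nv vx; apply: (PN x) => //; apply: ltnW.
have Pv : P (C * D + x).
  by apply: PC; rewrite ?modnMDl // (leq_trans (leq_pmulr _ D_gt0)) ?leq_addr.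
by apply: PN Pv; rewrite ?modnMDl //; lia.
Qed.

End EventuallyPeriodic.

Section SkewTriple.

Variables (P : nat -> Prop) (c : nat).
Hypothesis P_closed : four_term_closed P c.
Hypothesis P_pos : forall v, P v -> 0 < v.

Lemma skew_triple_shift p d t :
  skew_triple P c p d t -> skew_triple P c p d (d + t).
Proof.
move=> [[Pp Pd Pt Pdp Ptp] [pd dt tpd ct]]; have p_gt0 := P_pos Pp.
have Pdpt : P (d - p + t).
  case: (ltngtP d (t - p)) tpd => [d_lt_tp | tp_lt_d | ->] // _.
  - by apply: (P_closed Pdp Pd Ptp Pt); lia.
  - by apply: (P_closed Pdp Ptp Pd Pt); lia.
have Pdt : P (d + t).
  have -> : d + t = p + (d - p + t) by lia.
  by apply: (P_closed Pp Pd Pt Pdpt); lia.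
split; split=> //; try lia.
by have -> : d + t - p = d - p + t by lia.
Qed.

Lemma skew_triple_progression p d t :
  skew_triple P c p d t -> forall k, P (t + k * d).
Proof.
move=> skew k; elim: k t skew => [|k IH] t skew; first by rewrite addn0; case: skew => [[]].
by rewrite mulSn addnA [t + d]addnC; apply/IH/skew_triple_shift.
Qed.

End SkewTriple.

Section IncreasingSequence.

Variables (a : nat -> nat) (n : nat).
Hypothesis a_pos : forall i, 1 <= i -> 0 < a i.
Hypothesis a_incr : forall i, 1 <= i -> a i < a i.+1.
Hypothesis n_gt0 : 0 < n.
Hypothesis two_representations : forall m, n < m ->
  exists i r s j, [/\ 1 <= i, i < r, r <= s, s < j & a m = a i + a j /\ a m = a r + a s].
Hypothesis four_term_sums : forall i r s j, 1 <= i -> i < r -> r < s -> s < j ->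
  a i + a j = a r + a s -> a n < a i + a j -> exists m, n < m /\ a m = a i + a j.

Lemma ltn_a i j : 0 < i -> 0 < j -> (a i < a j) = (i < j).
Proof.
have a_homo : {in [pred k | 0 < k] &, {homo a : k l / k < l}}.
  apply: homo_ltn_in => [y x z|i' j' i'_gt0 _ k /andP [i'k _]|k /= k_gt0 _].
  - exact: ltn_trans.
  - by rewrite !inE in i'_gt0 *; apply: leq_ltn_trans i'k.
  - exact: a_incr.
exact: (leqW_mono_in (leq_mono_in a_homo)).
Qed.

Lemma inA_pos v : inA a v -> 0 < v.
Proof. by move=> [i [i_gt0 <-]]; apply: a_pos. Qed.

Lemma inA_four_term_closed : four_term_closed (inA a) (a n).
Proof.
move=> _ _ _ _ [i [i_gt0 <-]] [r [r_gt0 <-]] [s [s_gt0 <-]] [j [j_gt0 <-]].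
rewrite !ltn_a // => ir rs sj e an_lt.
have [m [nm <-]] := four_term_sums i_gt0 ir rs sj e an_lt.
by exists m; split=> //; apply: leq_ltn_trans nm.
Qed.

Definition summand (m p : nat) : bool :=
  (0 < p < m) && [exists q : 'I_m, (0 < q) && (a p + a q == a m)].

Lemma three_summands K m : n < m -> m <= K ->
  2 < #|[set p : 'I_K | summand m p]|.
Proof.
move=> nm mK; have [i [r [s [j [i_gt0 ir rs sj [ij rs_sum]]]]]] := two_representations nm.
have m_gt0 : 0 < m by apply: leq_ltn_trans nm.
have ai_gt0 := a_pos i_gt0.
have jm : j < m by rewrite -ltn_a ?ij; lia.
have [im rm sm] : [/\ i < m, r < m & s < m] by split; lia.
have summand_of x y (xm : x < m) (ym : y < m) : 0 < x -> 0 < y -> a m = a x + a y ->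
    summand m x.
  move=> x_gt0 y_gt0 e; rewrite /summand x_gt0 xm; apply/existsP.
  by exists (Ordinal ym); rewrite /= y_gt0 e eqxx.
have [iK rK jK] : [/\ i < K, r < K & j < K] by split; lia.
apply/card_gt2P; exists (Ordinal iK), (Ordinal rK), (Ordinal jK).
rewrite !inE -!val_eqE /=; split; last by split; lia.
split.
- by apply: (summand_of _ _ im jm) => //; lia.
- by apply: (summand_of _ _ rm sm) => //; lia.
- by apply: (summand_of _ _ jm im) => //; [lia | rewrite addnC].
Qed.

Section NoSkewTriple.

Hypothesis no_skew : ~ exists p d t, skew_triple (inA a) (a n) p d t.

Lemma summand_shift m1 m2 p : n < m1 -> m1 < m2 -> summand m1 p -> summand m2 p ->
  a m2 = a m1 + a p.
Proof.
move=> nm1 m12 /andP [/andP [p_gt0 pm1] /existsP [q1 /andP [q1_gt0 /eqP e1]]].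
move=> /andP [_ /existsP [q2 /andP [q2_gt0 /eqP e2]]].
have m1_gt0 : 0 < m1 by apply: leq_ltn_trans nm1.
have in_a k : 0 < k -> inA a (a k) by exists k.
apply/eqP; apply: contraT => not_shift; case: no_skew.
exists (a p), (a m1), (a m2); split; split.
- exact: in_a.
- exact: in_a.
- exact/in_a/(ltn_trans m1_gt0).
- by rewrite -e1 addKn; apply: in_a.
- by rewrite -e2 addKn; apply: in_a.
- by rewrite ltn_a.
- by rewrite ltn_a // (ltn_trans m1_gt0).
- by move: not_shift; rewrite -e1 -e2 addKn; lia.
- by rewrite ltn_a // ?(ltn_trans m1_gt0) // (ltn_trans nm1).
Qed.

Lemma summand_of_at_most_two L p : #|[set i : 'I_L | summand (n.+1 + i) p]| <= 2.
Proof.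
rewrite leqNgt; apply/card_gt2P => [[x [y [z [[xS yS zS] [xy yz zx]]]]]].
rewrite !inE in xS yS zS.
have ap_gt0 : 0 < a p by case/andP: xS => /andP [p_gt0 _] _; apply: a_pos.
have shift (u v : 'I_L) : u != v -> summand (n.+1 + u) p -> summand (n.+1 + v) p ->
    a (n.+1 + u) = a (n.+1 + v) + a p \/ a (n.+1 + v) = a (n.+1 + u) + a p.
  move=> uv Su Sv; case: (ltngtP u v) uv => [u_lt_v | v_lt_u | /val_inj ->]; last by rewrite eqxx.
  - by right; apply: summand_shift; rewrite ?ltn_add2l ?ltn_addr.
  - by left; apply: summand_shift; rewrite ?ltn_add2l ?ltn_addr.
have := shift _ _ xy xS yS; have := shift _ _ yz yS zS; have := shift _ _ zx zS xS.
lia.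
Qed.

End NoSkewTriple.

Lemma exists_skew_triple : exists p d t, skew_triple (inA a) (a n) p d t.
Proof.
apply: NNPP => no_skew; pose L := (2 * n).+3.
have many_summands (i : 'I_L) : 2 < #|[set p : 'I_(n.+1 + L) | summand (n.+1 + i) p]|.
  by apply: three_summands; [rewrite addSn ltnS leq_addr | rewrite leq_add2l ltnW].
have := double_counting_leq many_summands (summand_of_at_most_two no_skew _).
by rewrite !card_ord /L; lia.
Qed.

End IncreasingSequence.

Theorem mainTheorem1 (a : nat -> nat) (n : nat)
  (hpos : forall i, 1 <= i -> 0 < a i)
  (hinc : forall i, 1 <= i -> a i < a i.+1)
  (hn : 0 < n)
  (h1 : forall m, n < m ->
     exists i r s j, [/\ 1 <= i, i < r, r <= s, s < j &
        a m = a i + a j /\ a m = a r + a s])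
  (h2 : forall i r s j, 1 <= i -> i < r -> r < s -> s < j ->
     a i + a j = a r + a s -> a n < a i + a j ->
     exists m, n < m /\ a m = a i + a j) :
  exists N k, 1 <= k /\ forall x, N < x -> (inA a x <-> k %| x).
Proof.
have A_closed := inA_four_term_closed hinc h2.
have [p [d [t skew]]] := exists_skew_triple hpos hinc hn h1.
have d_gt0 : 0 < d by case: skew => [[_ /(inA_pos hpos)]].
have A_progression := skew_triple_progression A_closed (inA_pos hpos) skew.
exact: (eventually_periodic A_closed d_gt0 A_progression).
Qed.
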